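(* Let $\hat{\mathbf{P}}\in\mathbb{R}^{N\times N}$ be a matrix with nonnegative entries, columns summing to $1$, and $\hat{\mathbf{P}}\boldsymbol\mu=\boldsymbol\mu$, such that $\langle\hat{\mathbf{P}},\mathbf{P}\rangle_\mu\ge2\|\boldsymbol\mu\|^2$ and $c'\|\mathbf{P}\|_\mu^2\le\|\hat{\mathbf{P}}\|_\mu^2\le C'\|\mathbf{P}\|_\mu^2$ for constants $0<c'\le C'$. Let $\mathbf{V}=\theta\hat{\mathbf{P}}+(1-\theta)\boldsymbol\mu\mathbf{1}^\top$ for some $\theta\in(0,1)$. Then there are constants $c_1,c_2,c_3>0$ depending only on $C$ and $C'$ such that $$\alpha_V\in\Big[c_1\frac{\theta}{NK_P},\;c_2\theta\Big]\quad\text{and}\quad\|\boldsymbol\Delta_V\|_\mu^2\le c_3\theta^2K_P.$$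
   Context: $\boldsymbol\mu\in\mathbb{R}^N$ is a probability vector with $\mu_k\in[1/(CN),C/N]$ for all $k$, for a constant $C\ge1$. $\mathbf{P}\in\mathbb{R}^{N\times N}$ has nonnegative entries, columns summing to $1$, $\mathbf{P}\boldsymbol\mu=\boldsymbol\mu$, and satisfies $\|\mathbf{P}\|_\mu^2-\|\boldsymbol\mu\|^2\ge\|\boldsymbol\mu\|^2$. $\langle\mathbf{M},\mathbf{M}'\rangle_\mu=\operatorname{Tr}(\mathbf{M}\operatorname{diag}(\boldsymbol\mu)\mathbf{M}'^\top)$, $\|\mathbf{M}\|_\mu^2=\langle\mathbf{M},\mathbf{M}\rangle_\mu$; $\|\boldsymbol\mu\|$ Euclidean. $K_P=\|\mathbf{P}\|_\mu^2-\|\boldsymbol\mu\|^2$, $\alpha_V=(\langle\mathbf{V},\mathbf{P}\rangle_\mu-\|\boldsymbol\mu\|^2)/K_P$, $\boldsymbol\Delta_V=\mathbf{V}-\alpha_V\mathbf{P}-(1-\alpha_V)\boldsymbol\mu\mathbf{1}^\top$. *)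

From mathcomp Require Import all_boot all_order all_algebra.
Set Implicit Arguments. Unset Strict Implicit. Unset Printing Implicit Defensive.
Import Order.TTheory GRing.Theory Num.Theory.
Local Open Scope ring_scope.

Section Defs.
Variables (R : rcfType) (N : nat).

Definition ones : 'cV[R]_N := const_mx 1.

Definition ipmu (mu : 'cV[R]_N) (M M' : 'M[R]_N) : R :=
  \tr (M *m diag_mx (mu^T) *m M'^T).

Definition nmu2 (mu : 'cV[R]_N) (M : 'M[R]_N) : R := ipmu mu M M.

Definition eucl2 (mu : 'cV[R]_N) : R := \sum_i mu i 0 ^+ 2.

Definition mu1T (mu : 'cV[R]_N) : 'M[R]_N := mu *m ones^T.

Definition stoch_fix (mu : 'cV[R]_N) (P : 'M[R]_N) : Prop :=
  (forall i j, 0 <= P i j) /\ (forall j, \sum_i P i j = 1) /\ P *m mu = mu.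

Definition KP (mu : 'cV[R]_N) (P : 'M[R]_N) : R := nmu2 mu P - eucl2 mu.

Definition alphaV (mu : 'cV[R]_N) (P V : 'M[R]_N) : R :=
  (ipmu mu V P - eucl2 mu) / KP mu P.

Definition DeltaV (mu : 'cV[R]_N) (P V : 'M[R]_N) : 'M[R]_N :=
  V - alphaV mu P V *: P - (1 - alphaV mu P V) *: mu1T mu.

End Defs.

(* With U := mu 1^T, every M with M mu = mu (U included, as mu sums to 1) has
   <M, U>_mu = ||mu||^2, so <A - U, B - U>_mu = <A, B>_mu - ||mu||^2 for such A, B.
   In these centred coordinates K_P = ||P - U||_mu^2, V - U = theta (Ph - U),
   alpha_V is the coefficient of the mu-orthogonal projection of V - U onto P - U
   and Delta_V is its residual.  Hence alpha_V K_P = theta (<Ph, P>_mu - ||mu||^2)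
   and ||Delta_V||_mu^2 <= theta^2 (||Ph||_mu^2 - ||mu||^2); the bounds then follow
   from ||mu||^2 >= 1/(CN), <Ph, P>_mu >= 2 ||mu||^2,
   2 <Ph, P>_mu <= ||Ph||_mu^2 + ||P||_mu^2 and ||Ph||_mu^2 <= C' ||P||_mu^2 <= 2 C' K_P. *)
From mathcomp Require Import all_boot all_order all_algebra.
From mathcomp Require Import ring lra.
Set Implicit Arguments. Unset Strict Implicit. Unset Printing Implicit Defensive.
Import Order.TTheory GRing.Theory Num.Theory.
Local Open Scope ring_scope.

Section WeightedInnerProduct.
Variables (R : rcfType) (N : nat) (mu : 'cV[R]_N).

Lemma ipmuE (A B : 'M[R]_N) :
  ipmu mu A B = \sum_i \sum_j A i j * mu j 0 * B i j.
Proof.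
rewrite /ipmu /mxtrace; apply: eq_bigr => i _; rewrite mul_mx_diag !mxE.
by apply: eq_bigr => j _; rewrite !mxE.
Qed.

Lemma ipmuC (A B : 'M[R]_N) : ipmu mu A B = ipmu mu B A.
Proof. by rewrite /ipmu -mxtrace_tr !trmx_mul trmxK tr_diag_mx mulmxA. Qed.

Lemma ipmuDl (A B M : 'M[R]_N) : ipmu mu (A + B) M = ipmu mu A M + ipmu mu B M.
Proof. by rewrite /ipmu !mulmxDl mxtraceD. Qed.

Lemma ipmuZl a (A M : 'M[R]_N) : ipmu mu (a *: A) M = a * ipmu mu A M.
Proof. by rewrite /ipmu -!scalemxAl mxtraceZ. Qed.

Lemma ipmuBl (A B M : 'M[R]_N) : ipmu mu (A - B) M = ipmu mu A M - ipmu mu B M.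
Proof. by rewrite -scaleN1r ipmuDl ipmuZl mulN1r. Qed.

Lemma ipmuZr a (A M : 'M[R]_N) : ipmu mu M (a *: A) = a * ipmu mu M A.
Proof. by rewrite ipmuC ipmuZl ipmuC. Qed.

Lemma ipmuBr (A B M : 'M[R]_N) : ipmu mu M (A - B) = ipmu mu M A - ipmu mu M B.
Proof. by rewrite ipmuC ipmuBl ipmuC [ipmu _ B _]ipmuC. Qed.

Lemma mu1TE i j : mu1T mu i j = mu i 0.
Proof. by rewrite /mu1T !mxE big_ord1 !mxE mulr1. Qed.

Lemma ipmu_mu1T {M : 'M[R]_N} : M *m mu = mu -> ipmu mu M (mu1T mu) = eucl2 mu.
Proof.
move=> Mmu; rewrite ipmuE /eucl2; apply: eq_bigr => i _.
under eq_bigr => j _ do rewrite mu1TE.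
by rewrite -mulr_suml expr2; congr (_ * _); rewrite -{2}Mmu mxE.
Qed.

Lemma mu1T_fix : \sum_k mu k 0 = 1 -> mu1T mu *m mu = mu.
Proof.
move=> mu_sum1; apply/matrixP => i j; rewrite !ord1 !mxE.
under eq_bigr => k _ do rewrite mu1TE.
by rewrite -mulr_sumr mu_sum1 mulr1.
Qed.

Lemma ipmu_centred (A B : 'M[R]_N) : \sum_k mu k 0 = 1 ->
  A *m mu = mu -> B *m mu = mu ->
  ipmu mu (A - mu1T mu) (B - mu1T mu) = ipmu mu A B - eucl2 mu.
Proof.
move=> mu_sum1 Amu Bmu.
rewrite ipmuBl !ipmuBr [ipmu _ (mu1T _) B]ipmuC.
rewrite (ipmu_mu1T Amu) (ipmu_mu1T Bmu) (ipmu_mu1T (mu1T_fix mu_sum1)); ring.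
Qed.

Hypothesis mu_ge0 : forall k, 0 <= mu k 0.

Lemma nmu2_ge0 (A : 'M[R]_N) : 0 <= nmu2 mu A.
Proof.
rewrite /nmu2 ipmuE; apply: sumr_ge0 => i _; apply: sumr_ge0 => j _.
by rewrite mulrAC -expr2 mulr_ge0 ?sqr_ge0.
Qed.

Lemma ipmu_le_mean (A B : 'M[R]_N) :
  2 * ipmu mu A B <= nmu2 mu A + nmu2 mu B.
Proof.
have := nmu2_ge0 (A - B).
by rewrite /nmu2 ipmuBl !ipmuBr [ipmu _ B A]ipmuC; lra.
Qed.

Lemma nmu2_proj_residual (W X : 'M[R]_N) (a : R) :
  a * nmu2 mu X = ipmu mu W X -> nmu2 mu (W - a *: X) <= nmu2 mu W.
Proof.
move=> aX; have : 0 <= a * ipmu mu W X.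
  by rewrite -aX mulrA -expr2 mulr_ge0 ?sqr_ge0 ?nmu2_ge0.
move: aX; rewrite /nmu2 ipmuBl !ipmuBr !ipmuZl !ipmuZr [ipmu _ X W]ipmuC; nra.
Qed.

End WeightedInnerProduct.

Lemma eucl2_ge (R : rcfType) (N : nat) (mu : 'cV[R]_N) (lo : R) :
  \sum_k mu k 0 = 1 -> 0 <= lo -> (forall k, lo <= mu k 0) -> lo <= eucl2 mu.
Proof.
move=> mu_sum1 lo_ge0 mu_ge; rewrite -[lo]mul1r -mu_sum1 mulr_suml.
apply: ler_sum => k _; rewrite expr2 ler_wpM2l //.
exact: le_trans lo_ge0 (mu_ge k).
Qed.

Lemma sum_eq1_dim_gt0 (R : nzRingType) (N : nat) (f : 'I_N -> R) :
  \sum_k f k = 1 -> (0 < N)%N.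
Proof.
rewrite lt0n => f_sum1; apply/eqP => N0; subst N.
by move: f_sum1; rewrite big_ord0 => /eqP; rewrite eq_sym oner_eq0.
Qed.

Lemma DeltaV_centred (R : rcfType) (N : nat) (mu : 'cV[R]_N) (P V : 'M[R]_N) :
  DeltaV mu P V = (V - mu1T mu) - alphaV mu P V *: (P - mu1T mu).
Proof. by apply/matrixP => i j; rewrite !mxE; ring. Qed.

Section CentredMixture.
Variables (R : rcfType) (N : nat) (mu : 'cV[R]_N) (P Ph : 'M[R]_N) (theta : R).
Hypotheses (mu_sum1 : \sum_k mu k 0 = 1) (Pmu : P *m mu = mu) (Phmu : Ph *m mu = mu).
Let U := mu1T mu.
Let V := theta *: Ph + (1 - theta) *: U.

Lemma mix_fix : V *m mu = mu.
Proof. by rewrite mulmxDl -!scalemxAl Phmu mu1T_fix // -scalerDl subrKC scale1r. Qed.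

Lemma mix_centred : V - U = theta *: (Ph - U).
Proof. by apply/matrixP => i j; rewrite !mxE; ring. Qed.

Hypothesis KP_neq0 : KP mu P != 0.

Lemma alphaV_proj : alphaV mu P V * nmu2 mu (P - U) = ipmu mu (V - U) (P - U).
Proof. by rewrite /nmu2 !ipmu_centred ?mix_fix // divfK. Qed.

Lemma alphaV_mix : alphaV mu P V * KP mu P = theta * (ipmu mu Ph P - eucl2 mu).
Proof. by move: alphaV_proj; rewrite mix_centred ipmuZl /nmu2 !ipmu_centred. Qed.

Lemma nmu2_DeltaV_mix_le : (forall k, 0 <= mu k 0) ->
  nmu2 mu (DeltaV mu P V) <= theta ^+ 2 * (nmu2 mu Ph - eucl2 mu).
Proof.
move=> mu_ge0; rewrite DeltaV_centred.
apply: le_trans (nmu2_proj_residual mu_ge0 alphaV_proj) _.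
by rewrite mix_centred /nmu2 ipmuZl ipmuZr ipmu_centred // mulrA -expr2.
Qed.

End CentredMixture.

Theorem lemmaH1 (R : rcfType) (C C' : R) (hC : 1 <= C) (hC' : 0 < C') :
  exists c1 c2 c3 : R, [/\ 0 < c1, 0 < c2 & 0 < c3] /\
  forall (N : nat) (mu : 'cV[R]_N) (P Ph : 'M[R]_N) (c' theta : R),
    \sum_k mu k 0 = 1 ->
    (forall k, 1 / (C * N%:R) <= mu k 0 <= C / N%:R) ->
    stoch_fix mu P ->
    nmu2 mu P - eucl2 mu >= eucl2 mu ->
    stoch_fix mu Ph ->
    ipmu mu Ph P >= 2 * eucl2 mu ->
    0 < c' -> c' <= C' ->
    c' * nmu2 mu P <= nmu2 mu Ph -> nmu2 mu Ph <= C' * nmu2 mu P ->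
    0 < theta < 1 ->
    let V := theta *: Ph + (1 - theta) *: mu1T mu in
    c1 * (theta / (N%:R * KP mu P)) <= alphaV mu P V <= c2 * theta /\
    nmu2 mu (DeltaV mu P V) <= c3 * theta ^+ 2 * KP mu P.
Proof.
exists (1 / C), (C' + 1), (2 * C'); split; first by split; rewrite ?divr_gt0; lra.
move=> N mu P Ph c' th mu_sum1 mu_bd [_ [_ Pmu]] KP_ge [_ [_ Phmu]] x_ge _ _ _ Ph_le.
move=> /andP[th_gt0 th_lt1] V.
have lo_gt0 : 0 < 1 / (C * N%:R).
  have C_gt0 : 0 < C by lra.
  by rewrite divr_gt0 // mulr_gt0 // ltr0n (sum_eq1_dim_gt0 mu_sum1).
have mu_ge0 k : 0 <= mu k 0 by case/andP: (mu_bd k) => /(le_trans (ltW lo_gt0)).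
have e_ge : 1 / (C * N%:R) <= eucl2 mu.
  by apply: (eucl2_ge mu_sum1 (ltW lo_gt0)) => k; case/andP: (mu_bd k).
have K_gt0 : 0 < KP mu P by rewrite /KP; lra.
have KP_neq0 := lt0r_neq0 K_gt0.
have alphaE := alphaV_mix th mu_sum1 Pmu Phmu KP_neq0.
have x_le := ipmu_le_mean mu_ge0 Ph P.
have alpha_ge : th * eucl2 mu <= alphaV mu P V * KP mu P.
  by rewrite alphaE ler_pM2l //; lra.
split; [apply/andP; split|].
- have -> : 1 / C * (th / (N%:R * KP mu P)) = th * (1 / (C * N%:R)) / KP mu P.
    by rewrite !invfM; ring.
  by rewrite ler_pdivrMr // (le_trans _ alpha_ge) // ler_pM2l.
- rewrite -(ler_pM2r K_gt0) alphaE [_ * th]mulrC -mulrA ler_pM2l //.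
  by move: Ph_le; rewrite /KP; nra.
- apply: le_trans (nmu2_DeltaV_mix_le th mu_sum1 Pmu Phmu KP_neq0 mu_ge0) _.
  have Ph_centred_le : nmu2 mu Ph - eucl2 mu <= 2 * C' * KP mu P.
    by move: Ph_le; rewrite /KP; nra.
  rewrite (_ : 2 * C' * _ * _ = th ^+ 2 * (2 * C' * KP mu P)); last by ring.
  by apply: ler_wpM2l; rewrite ?sqr_ge0.
Qed.
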